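(* Let $t$ be an $\mathrm{SL}_2$-tiling and let $i\le j$, $p\le q$ be integers, not both $i=j$ and $p=q$, such that $t_{jp}=t_{iq}=1$. Then there is a friese on the diagonal band $D=\{(x,y)\in\mathbb{Z}^2: i-q\le x-y\le j-p\}$ which agrees with $t$ on the rectangle $R=\{(x,y)\in\mathbb{Z}^2: i\le x\le j,\ p\le y\le q\}$.
   Context: An $\mathrm{SL}_2$-tiling is a map $t:\mathbb{Z}\times\mathbb{Z}\to\{1,2,3,\dots\}$, $(i,j)\mapsto t_{ij}$, with $t_{ij}t_{i+1,j+1}-t_{i,j+1}t_{i+1,j}=1$ for all $i,j$. A partial $\mathrm{SL}_2$-tiling defined on $E\subseteq\mathbb{Z}^2$ is a map $t:E\to\{1,2,3,\dots\}$ such that $t_{xy}t_{x+1,y+1}-t_{x,y+1}t_{x+1,y}=1$ whenever all four points $(x,y),(x,y+1),(x+1,y),(x+1,y+1)$ lie in $E$. For integers $c<c'$, a friese on the diagonal band $\{(x,y)\in\mathbb{Z}^2: c\le x-y\le c'\}$ is a partial $\mathrm{SL}_2$-tiling defined on this band with value $1$ at every point with $x-y=c$ or $x-y=c'$. *)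

From Stdlib Require Import ZArith.
Open Scope Z_scope.

Definition is_SL2_tiling (t : Z -> Z -> Z) : Prop :=
  (forall i j, 1 <= t i j) /\
  (forall i j, t i j * t (i+1) (j+1) - t i (j+1) * t (i+1) j = 1).

Definition in_band (c c' x y : Z) : Prop := c <= x - y <= c'.

(* A partial SL2-tiling defined on a set E (given as a predicate); a map
   Z -> Z -> Z whose values outside E are irrelevant. *)
Definition is_partial_SL2_tiling (E : Z -> Z -> Prop) (f : Z -> Z -> Z) : Prop :=
  (forall x y, E x y -> 1 <= f x y) /\
  (forall x y, E x y -> E x (y+1) -> E (x+1) y -> E (x+1) (y+1) ->
     f x y * f (x+1) (y+1) - f x (y+1) * f (x+1) y = 1).

Definition is_friese (c c' : Z) (f : Z -> Z -> Z) : Prop :=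
  c < c' /\
  is_partial_SL2_tiling (in_band c c') f /\
  (forall x y, x - y = c -> f x y = 1) /\
  (forall x y, x - y = c' -> f x y = 1).

From Stdlib Require Import ZArith Lia.
Open Scope Z_scope.

(* A friese of width N is the same thing as a sequence of
   vectors v_k in Z^2, antiperiodic of period N (v_(k+N) = -v_k), with
   det(v_k, v_(k+1)) = 1 and det(v_k, v_l) >= 1 for 0 < l - k < N: the
   entries are the determinants det(v_y, v_(x+s)), and the SL2 relation is a
   Plücker identity.  Such a sequence is the antiperiodic extension of any
   "window" w_0, ..., w_(N-1) whose pairwise determinants are positive and
   equal to 1 for neighbours (cyclically).
   For an SL2-tiling t every row is a linear combination of the rows i and
   i+1 (all rows satisfy the same three-term recurrence), so
   t x y = det(C_y, A_x) with C_y = (t i y, t (i+1) y) and a dual vector A_x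
   built from columns p, p+1.  The window C_p, ..., C_q, A_i, ..., A_j has the
   required properties; the two corner conditions are exactly t i q = 1 and
   t j p = 1.  Its extension gives the friese, which agrees with t on the
   rectangle because det(C_y, A_x) = t x y. *)

Definition det2 (u v : Z * Z) : Z := fst u * snd v - snd u * fst v.

Definition vopp (u : Z * Z) : Z * Z := (- fst u, - snd u).

Lemma det2_swap (u v : Z * Z) : det2 u v = - det2 v u.
Proof. unfold det2; ring. Qed.

Lemma det2_opp_l (u v : Z * Z) : det2 (vopp u) v = - det2 u v.
Proof. unfold det2, vopp; simpl; ring. Qed.

Lemma det2_opp_r (u v : Z * Z) : det2 u (vopp v) = - det2 u v.
Proof. unfold det2, vopp; simpl; ring. Qed.

Lemma plucker (u1 u2 u3 u4 : Z * Z) :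
  det2 u1 u3 * det2 u2 u4 - det2 u2 u3 * det2 u1 u4 = det2 u1 u2 * det2 u3 u4.
Proof. unfold det2; ring. Qed.

(* The Plücker relation with the fourth vector (0,1): used to propagate
   positivity of determinants along a sequence. *)
Lemma det2_fst_expansion (u1 u2 u3 : Z * Z) :
  fst u2 * det2 u1 u3 = fst u1 * det2 u2 u3 + fst u3 * det2 u1 u2.
Proof. unfold det2; ring. Qed.

Lemma det2_increasing (u : Z -> Z * Z) :
  (forall k, 0 < fst (u k)) ->
  (forall k, det2 (u k) (u (k + 1)) = 1) ->
  forall k m, k < m -> 1 <= det2 (u k) (u m).
Proof.
  intros Hpos Hsucc k m Hkm.
  replace m with (k + 1 + (m - k - 1)) by ring.
  assert (Hn : 0 <= m - k - 1) by lia. revert Hn.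
  generalize (m - k - 1) as n. apply natlike_ind.
  - rewrite Z.add_0_r, Hsucc. lia.
  - intros n Hn IH.
    set (m' := k + 1 + n) in IH.
    replace (k + 1 + Z.succ n) with (m' + 1) by (unfold m'; lia).
    pose proof (det2_fst_expansion (u k) (u m') (u (m' + 1))) as E.
    rewrite Hsucc in E.
    pose proof (Hpos k). pose proof (Hpos m'). pose proof (Hpos (m' + 1)).
    nia.
Qed.

Definition antiperiodic_ext (N : Z) (w : Z -> Z * Z) (k : Z) : Z * Z :=
  if Z.even (k / N) then w (k mod N) else vopp (w (k mod N)).

Lemma antiperiodic_ext_decomp (N : Z) (w : Z -> Z * Z) (a n : Z) :
  0 <= a < N ->
  antiperiodic_ext N w (a + n * N) = if Z.even n then w a else vopp (w a).
Proof.
  intros Ha. unfold antiperiodic_ext.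
  rewrite Z.div_add, Z.mod_add, Z.div_small, Z.mod_small by lia.
  reflexivity.
Qed.

Lemma antiperiodic_ext_window (N : Z) (w : Z -> Z * Z) (k : Z) :
  0 <= k < N -> antiperiodic_ext N w k = w k.
Proof.
  intros Hk. rewrite <- (Z.add_0_r k) at 1. rewrite <- (Z.mul_0_l N).
  now rewrite antiperiodic_ext_decomp.
Qed.

Lemma antiperiodic_ext_det (N : Z) (w : Z -> Z * Z) (k l : Z) :
  0 < l - k < N ->
  exists a b, 0 <= a /\ a < b < N /\ (b - a = l - k \/ b - a = N - (l - k)) /\
    det2 (antiperiodic_ext N w k) (antiperiodic_ext N w l) = det2 (w a) (w b).
Proof.
  intros Hkl.
  pose proof (Z.mod_pos_bound k N ltac:(lia)) as Ha.
  pose proof (Z.div_mod k N ltac:(lia)) as Hk.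
  set (a := k mod N) in *. set (n := k / N) in *. set (d := l - k) in *.
  replace l with (k + d) by (unfold d; ring).
  destruct (Z_lt_le_dec (a + d) N) as [Hin | Hout].
  - exists a, (a + d). split; [lia | split; [lia | split; [lia |]]].
    replace (k + d) with (a + d + n * N) by lia.
    replace k with (a + n * N) by lia.
    rewrite !antiperiodic_ext_decomp by lia.
    destruct (Z.even n); [reflexivity |].
    rewrite det2_opp_l, det2_opp_r. ring.
  - exists (a + d - N), a. split; [lia | split; [lia | split; [lia |]]].
    replace (k + d) with (a + d - N + (n + 1) * N) by lia.
    replace k with (a + n * N) by lia.
    rewrite !antiperiodic_ext_decomp by lia.
    rewrite Z.even_add. destruct (Z.even n); simpl;
      rewrite ?det2_opp_l, ?det2_opp_r, (det2_swap (w a)); ring.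
Qed.

Lemma antiperiodic_ext_pos (N : Z) (w : Z -> Z * Z) :
  (forall a b, 0 <= a /\ a < b < N -> 1 <= det2 (w a) (w b)) ->
  forall k l, 0 < l - k < N ->
  1 <= det2 (antiperiodic_ext N w k) (antiperiodic_ext N w l).
Proof.
  intros Hw k l Hkl.
  destruct (antiperiodic_ext_det N w k l Hkl) as (a & b & Ha & Hab & _ & ->).
  apply Hw; lia.
Qed.

Lemma antiperiodic_ext_unimodular (N : Z) (w : Z -> Z * Z) :
  1 < N ->
  (forall a b, 0 <= a /\ a < b < N -> b - a = 1 \/ b - a = N - 1 ->
     det2 (w a) (w b) = 1) ->
  forall k l, l - k = 1 \/ l - k = N - 1 ->
  det2 (antiperiodic_ext N w k) (antiperiodic_ext N w l) = 1.
Proof.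
  intros HN Hw k l Hkl.
  destruct (antiperiodic_ext_det N w k l ltac:(lia)) as (a & b & Ha & Hab & Hd & ->).
  apply Hw; lia.
Qed.

Lemma friese_of_sequence (v : Z -> Z * Z) (N s : Z) :
  2 < N ->
  (forall k l, 0 < l - k < N -> 1 <= det2 (v k) (v l)) ->
  (forall k l, l - k = 1 \/ l - k = N - 1 -> det2 (v k) (v l) = 1) ->
  is_friese (1 - s) (N - 1 - s) (fun x y => det2 (v y) (v (x + s))).
Proof.
  intros HN Hpos Hone.
  unfold is_friese, is_partial_SL2_tiling, in_band.
  split; [lia | split; [split | split]].
  - intros x y Hb. apply Hpos. lia.
  - intros x y _ _ _ _.
    replace (x + 1 + s) with (x + s + 1) by ring.
    rewrite plucker, (Hone y (y + 1)), (Hone (x + s) (x + s + 1)) by lia.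
    ring.
  - intros x y Hxy. apply Hone. lia.
  - intros x y Hxy. apply Hone. lia.
Qed.

Lemma Z_ind_from (P : Z -> Prop) (z0 : Z) :
  P z0 -> (forall z, P z -> P (z + 1)) -> (forall z, P (z + 1) -> P z) ->
  forall z, P z.
Proof.
  intros H0 Hup Hdown z.
  replace z with (z0 + (z - z0)) by ring.
  induction (z - z0) as [| n IH | n IH] using Z.peano_ind.
  - now rewrite Z.add_0_r.
  - replace (z0 + Z.succ n) with (z0 + n + 1) by lia. auto.
  - apply Hdown. now replace (z0 + Z.pred n + 1) with (z0 + n) by lia.
Qed.

Definition solves_recurrence (a c g : Z -> Z) : Prop :=
  forall y, a y * (g (y - 1) + g (y + 1)) = c y * g y.

Lemma solves_recurrence_lincomb (a c g h : Z -> Z) (alpha beta : Z) :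
  solves_recurrence a c g -> solves_recurrence a c h ->
  solves_recurrence a c (fun y => alpha * g y + beta * h y).
Proof.
  intros Hg Hh y.
  transitivity (alpha * (a y * (g (y - 1) + g (y + 1)))
              + beta * (a y * (h (y - 1) + h (y + 1)))); [ring |].
  rewrite Hg, Hh. ring.
Qed.

Lemma solves_recurrence_zero (a c g : Z -> Z) (p : Z) :
  (forall y, a y <> 0) -> solves_recurrence a c g ->
  g p = 0 -> g (p + 1) = 0 -> forall y, g y = 0.
Proof.
  intros Ha Hg Hp Hp1.
  assert (Hpair : forall y, g y = 0 /\ g (y + 1) = 0).
  { apply (Z_ind_from _ p); [tauto | |].
    - intros z [Hz Hz1]. split; [exact Hz1 |].
      pose proof (Hg (z + 1)) as R.
      replace (z + 1 - 1) with z in R by ring. rewrite Hz, Hz1 in R.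
      pose proof (Ha (z + 1)). nia.
    - intros z [Hz1 Hz2]. split; [| exact Hz1].
      pose proof (Hg (z + 1)) as R.
      replace (z + 1 - 1) with z in R by ring. rewrite Hz1, Hz2 in R.
      pose proof (Ha (z + 1)). nia. }
  intros y. apply Hpair.
Qed.

(* Vectors read off an SL2-tiling: the column y restricted to rows i, i+1,
   the row x restricted to columns p, p+1, and the dual vector A_x whose
   determinant with the column vectors reproduces row x. *)

Definition colv (t : Z -> Z -> Z) (i y : Z) : Z * Z := (t i y, t (i + 1) y).

Definition rowv (t : Z -> Z -> Z) (p x : Z) : Z * Z := (t x p, t x (p + 1)).

Definition dual (t : Z -> Z -> Z) (i p x : Z) : Z * Z :=
  (det2 (rowv t p x) (rowv t p i), det2 (rowv t p x) (rowv t p (i + 1))).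

(* The window C_p, ..., C_q, A_i, ..., A_j (indexed from 0). *)
Definition tiling_window (t : Z -> Z -> Z) (i p q m : Z) : Z * Z :=
  if m <=? q - p then colv t i (p + m) else dual t i p (i + m - (q - p + 1)).

Section Tiling.

Variable t : Z -> Z -> Z.
Hypothesis Ht : is_SL2_tiling t.

Lemma tile_pos x y : 1 <= t x y.
Proof. apply (proj1 Ht). Qed.

Lemma tile_det x y : t x y * t (x + 1) (y + 1) - t x (y + 1) * t (x + 1) y = 1.
Proof. apply (proj2 Ht). Qed.

Lemma colv_increasing i k m : k < m -> 1 <= det2 (colv t i k) (colv t i m).
Proof.
  apply det2_increasing; intros y; unfold colv, det2; simpl.
  - pose proof (tile_pos i y). lia.
  - pose proof (tile_det i y). lia.
Qed.

Lemma rowv_increasing p k m : k < m -> 1 <= det2 (rowv t p k) (rowv t p m).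
Proof.
  apply det2_increasing; intros x; unfold rowv, det2; simpl.
  - pose proof (tile_pos x p). lia.
  - apply tile_det.
Qed.

(* Neighbouring rows satisfy the same three-term recurrence. *)
Lemma adjacent_rows_ratio x y :
  t x y * (t (x + 1) (y - 1) + t (x + 1) (y + 1))
  = t (x + 1) y * (t x (y - 1) + t x (y + 1)).
Proof.
  pose proof (tile_det x (y - 1)) as H1. pose proof (tile_det x y) as H2.
  replace (y - 1 + 1) with y in H1 by ring. lia.
Qed.

Lemma rows_solve_recurrence i x :
  solves_recurrence (t i) (fun y => t i (y - 1) + t i (y + 1)) (t x).
Proof.
  unfold solves_recurrence. revert x. refine (Z_ind_from _ i _ _ _).
  - intros y. ring.
  - intros x IH y.
    pose proof (adjacent_rows_ratio x y) as E. pose proof (IH y) as R.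
    apply (Z.mul_reg_l _ _ (t x y)); [pose proof (tile_pos x y); lia |].
    transitivity (t i y * (t x y * (t (x + 1) (y - 1) + t (x + 1) (y + 1)))); [ring |].
    rewrite E.
    transitivity (t (x + 1) y * (t i y * (t x (y - 1) + t x (y + 1)))); [ring |].
    rewrite R. ring.
  - intros x IH y.
    pose proof (adjacent_rows_ratio x y) as E. pose proof (IH y) as R.
    apply (Z.mul_reg_l _ _ (t (x + 1) y)); [pose proof (tile_pos (x + 1) y); lia |].
    transitivity (t i y * (t (x + 1) y * (t x (y - 1) + t x (y + 1)))); [ring |].
    rewrite <- E.
    transitivity (t x y * (t i y * (t (x + 1) (y - 1) + t (x + 1) (y + 1)))); [ring |].
    rewrite R. ring.
Qed.

Lemma tiling_rank2 i p x y : t x y = det2 (colv t i y) (dual t i p x).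
Proof.
  set (A := dual t i p x).
  (* g = row x - (snd A * row i - fst A * row (i+1)) solves the common
     recurrence and vanishes at columns p, p+1 by the SL2 relation at (i, p). *)
  set (g := fun y => 1 * t x y + (- 1) * (snd A * t i y + (- fst A) * t (i + 1) y)).
  assert (Hg : solves_recurrence (t i) (fun y => t i (y - 1) + t i (y + 1)) g).
  { apply solves_recurrence_lincomb; [apply rows_solve_recurrence |].
    apply solves_recurrence_lincomb; apply rows_solve_recurrence. }
  assert (Hzero : forall y, g y = 0).
  { refine (solves_recurrence_zero _ _ g p _ Hg _ _).
    - intros z. pose proof (tile_pos i z). lia.
    - unfold g, A, dual, rowv, det2; cbn [fst snd].
      transitivity (t x p * (1 - (t i p * t (i + 1) (p + 1) - t i (p + 1) * t (i + 1) p)));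
        [ring | rewrite tile_det; ring].
    - unfold g, A, dual, rowv, det2; cbn [fst snd].
      transitivity (t x (p + 1) * (1 - (t i p * t (i + 1) (p + 1) - t i (p + 1) * t (i + 1) p)));
        [ring | rewrite tile_det; ring]. }
  pose proof (Hzero y) as Hy. unfold g in Hy. unfold det2, colv; cbn [fst snd]. lia.
Qed.

Lemma dual_det i p x x' :
  det2 (dual t i p x) (dual t i p x') = det2 (rowv t p x) (rowv t p x').
Proof.
  transitivity (det2 (rowv t p x) (rowv t p x') * det2 (rowv t p i) (rowv t p (i + 1))).
  - unfold dual. rewrite <- plucker. unfold det2 at 1; simpl. ring.
  - replace (det2 (rowv t p i) (rowv t p (i + 1))) with 1; [ring |].
    symmetry. apply tile_det.
Qed.

Section Window.

Variables i j p q : Z.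

Lemma tiling_window_det a b : 0 <= a < b ->
  let w := tiling_window t i p q in
  (b <= q - p /\ det2 (w a) (w b) = det2 (colv t i (p + a)) (colv t i (p + b)))
  \/ (a <= q - p < b /\ det2 (w a) (w b) = t (i + b - (q - p + 1)) (p + a))
  \/ (q - p < a /\ det2 (w a) (w b)
        = det2 (rowv t p (i + a - (q - p + 1))) (rowv t p (i + b - (q - p + 1)))).
Proof.
  intros Hab w. unfold w, tiling_window.
  destruct (Z.leb_spec a (q - p)), (Z.leb_spec b (q - p)).
  - left. split; [lia | reflexivity].
  - right; left. split; [lia |]. symmetry. apply tiling_rank2.
  - lia.
  - right; right. split; [lia |]. apply dual_det.
Qed.

Lemma tiling_window_pos a b : 0 <= a < b ->
  1 <= det2 (tiling_window t i p q a) (tiling_window t i p q b).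
Proof.
  intros Hab.
  destruct (tiling_window_det a b Hab) as [[_ ->] | [[_ ->] | [_ ->]]].
  - apply colv_increasing. lia.
  - apply tile_pos.
  - apply rowv_increasing. lia.
Qed.

Hypotheses (Hij : i <= j) (Hpq : p <= q) (Hjp : t j p = 1) (Hiq : t i q = 1).

(* Cyclic neighbours in the window are unimodular; the corners C_q, A_i and
   C_p, A_j give exactly the hypotheses t i q = 1 and t j p = 1. *)
Lemma tiling_window_unimodular a b :
  0 <= a /\ a < b < j - i + q - p + 2 ->
  b - a = 1 \/ b - a = j - i + q - p + 1 ->
  det2 (tiling_window t i p q a) (tiling_window t i p q b) = 1.
Proof.
  intros Hab Hd.
  destruct (tiling_window_det a b ltac:(lia)) as [[Hb ->] | [[Ha ->] | [Ha ->]]].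
  - replace (p + b) with (p + a + 1) by lia.
    unfold colv, det2; simpl. pose proof (tile_det i (p + a)). lia.
  - destruct Hd as [Hd | Hd].
    + replace (i + b - (q - p + 1)) with i by lia.
      now replace (p + a) with q by lia.
    + replace (i + b - (q - p + 1)) with j by lia.
      now replace (p + a) with p by lia.
  - replace (i + b - (q - p + 1)) with (i + a - (q - p + 1) + 1) by lia.
    unfold rowv, det2; simpl. apply tile_det.
Qed.

Lemma tiling_window_agrees x y : i <= x -> p <= y <= q ->
  det2 (tiling_window t i p q (y - p)) (tiling_window t i p q (x + (q + 1 - i) - p))
  = t x y.
Proof.
  intros Hx Hy. unfold tiling_window.
  destruct (Z.leb_spec (y - p) (q - p)); [| lia].
  destruct (Z.leb_spec (x + (q + 1 - i) - p) (q - p)); [lia |].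
  replace (p + (y - p)) with y by ring.
  replace (i + (x + (q + 1 - i) - p) - (q - p + 1)) with x by ring.
  symmetry. apply tiling_rank2.
Qed.

End Window.

End Tiling.

Theorem proposition7p2 (t : Z -> Z -> Z) (i j p q : Z) :
  is_SL2_tiling t ->
  i <= j -> p <= q -> ~ (i = j /\ p = q) ->
  t j p = 1 -> t i q = 1 ->
  exists f : Z -> Z -> Z,
    is_friese (i - q) (j - p) f /\
    (forall x y, i <= x <= j -> p <= y <= q -> f x y = t x y).
Proof.
  intros Ht Hij Hpq Hne Hjp Hiq.
  set (N := j - i + q - p + 2).
  set (w := tiling_window t i p q).
  set (v := fun k => antiperiodic_ext N w (k - p)).
  exists (fun x y => det2 (v y) (v (x + (q + 1 - i)))). split.
  - replace (i - q) with (1 - (q + 1 - i)) by ring.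
    replace (j - p) with (N - 1 - (q + 1 - i)) by (unfold N; ring).
    apply friese_of_sequence; [unfold N; lia | |]; intros k l Hkl; unfold v.
    + apply antiperiodic_ext_pos; [| lia].
      intros a b Hab. apply tiling_window_pos; [exact Ht | lia].
    + apply antiperiodic_ext_unimodular; [unfold N; lia | | lia].
      intros a b Hab Hd. apply (tiling_window_unimodular t Ht i j p q); auto; unfold N in *; lia.
  - intros x y Hx Hy. unfold v.
    rewrite !antiperiodic_ext_window by (unfold N; lia).
    now apply tiling_window_agrees.
Qed.
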